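(* Let $W=e^{-q}$ be the bivariate Freud weight and $\{\mathbb{P}_n\}$ an orthonormal polynomial system for it, with matrices $G^n_k$, $G_n$, $A_{n,i}$ as in the context. Then for all $n\geqslant0$ and $i,j\in\{1,2\}$, $$A_{n,i}A_{n,j}^T+A_{n-1,i}^TA_{n-1,j}=G^n_{n-2}G_{n-2}^{-1}A_{n-2,i}A_{n-1,j}-A_{n,i}A_{n+1,j}G^{n+2}_nG_n^{-1}.$$
   Context: Parameters $a_{4,0},a_{2,2},a_{0,4}\geqslant0$, $a_{2,0},a_{0,2}\in\mathbb{R}$, $a_{4,0}+a_{2,2}>0$, $a_{2,2}+a_{0,4}>0$; $q(x,y)=a_{4,0}x^4+a_{2,2}x^2y^2+a_{0,4}y^4+a_{2,0}x^2+a_{0,2}y^2$, $W=e^{-q}$, inner product $(f,g)=\iint_{\mathbb{R}^2}fgW\,dx\,dy$ (entrywise on vectors). $\mathbb{X}_n=(x^n,x^{n-1}y,\dots,y^n)^T$. An orthonormal polynomial system: column vectors $\mathbb{P}_n=(P_{n,0},\dots,P_{n,n})^T$ of linearly independent polynomials of exact total degree $n$ with $(\mathbb{P}_n,\mathbb{P}_m^T)=\delta_{nm}I_{n+1}$. Write $\mathbb{P}_n=\sum_kG^n_k\mathbb{X}_k$ with constant $(n+1)\times(k+1)$ matrices, $G_n:=G^n_n$ invertible, convention $G^n_m=0$ for $m<0$ or $m>n$. $A_{n,i}$ ($(n+1)\times(n+2)$) are defined by $x\mathbb{P}_n=A_{n,1}\mathbb{P}_{n+1}+A_{n-1,1}^T\mathbb{P}_{n-1}$,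 $y\mathbb{P}_n=A_{n,2}\mathbb{P}_{n+1}+A_{n-1,2}^T\mathbb{P}_{n-1}$, $n\geqslant0$, $\mathbb{P}_{-1}=0$; matrices $A_{m,i}$ with $m<0$ are taken to be zero. *)

From HB Require Import structures.
From mathcomp Require Import all_boot all_order all_algebra.
From mathcomp Require Import all_classical all_reals all_analysis.
Set Implicit Arguments. Unset Strict Implicit. Unset Printing Implicit Defensive.
Import Order.TTheory GRing.Theory Num.Theory.
Local Open Scope ring_scope.

Section FreudDefs.
Variable R : realType.

Definition freud_q (a40 a22 a04 a20 a02 : R) (z : R * R) : R :=
  a40 * z.1 ^+ 4 + a22 * z.1 ^+ 2 * z.2 ^+ 2 + a04 * z.2 ^+ 4
  + a20 * z.1 ^+ 2 + a02 * z.2 ^+ 2.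

Definition freud_W (a40 a22 a04 a20 a02 : R) (z : R * R) : R :=
  expR (- freud_q a40 a22 a04 a20 a02 z).

Definition monvec (k : nat) (z : R * R) : 'cV[R]_k.+1 :=
  \col_(i < k.+1) (z.1 ^+ (k - i) * z.2 ^+ i).

Definition opsP (G : forall n k : nat, 'M[R]_(n.+1, k.+1)) (n : nat)
  (z : R * R) : 'cV[R]_n.+1 :=
  \sum_(k < n.+1) G n k *m monvec k z.

Definition opsPprev (G : forall n k : nat, 'M[R]_(n.+1, k.+1)) (n : nat)
  (z : R * R) : 'cV[R]_n :=
  match n return 'cV[R]_n with
  | 0 => 0
  | m.+1 => opsP G m z
  end.

Definition Aprev (A : forall n : nat, 'M[R]_(n.+1, n.+2)) (n : nat)
  : 'M[R]_(n, n.+1) :=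
  match n return 'M[R]_(n, n.+1) with
  | 0 => 0
  | m.+1 => A m
  end.

(* the term G^n_{n-2} G_{n-2}^{-1} A_{n-2,i} A_{n-1,j}, which is 0 for n < 2
   (convention G^n_m = 0 for m < 0) *)
Definition lowTerm (G : forall n k : nat, 'M[R]_(n.+1, k.+1))
  (Ai Aj : forall n : nat, 'M[R]_(n.+1, n.+2)) (n : nat) : 'M[R]_n.+1 :=
  match n return 'M[R]_n.+1 with
  | m.+2 => G m.+2 m *m invmx (G m m) *m Ai m *m Aj m.+1
  | _ => 0
  end.

Local Open Scope ereal_scope.

Definition leb2 := ((@lebesgue_measure R) \x (@lebesgue_measure R)).

Definition orthonormal_system (W : R * R -> R)
  (G : forall n k : nat, 'M[R]_(n.+1, k.+1)) : Prop :=
  (forall n, G n n \in unitmx) /\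
  forall (n m : nat) (i : 'I_n.+1) (j : 'I_m.+1),
    leb2.-integrable setT
      (fun z => ((opsP G n z) i 0 * (opsP G m z) j 0 * W z)%R%:E) /\
    \int[leb2]_z ((opsP G n z) i 0 * (opsP G m z) j 0 * W z)%R%:E
      = ((n == m) && (nat_of_ord i == nat_of_ord j))%:R%:E.

End FreudDefs.

(* coordinate functions: index 0 <-> x (i = 1 in the paper), 1 <-> y (i = 2) *)
Definition coordf {R : realType} (i : 'I_2) (z : R * R) : R :=
  if nat_of_ord i == 0%N then z.1 else z.2.

From HB Require Import structures.
From mathcomp Require Import all_boot all_order all_algebra.
From mathcomp Require Import all_classical all_reals all_analysis.
From mathcomp Require Import zify.
Import Order.TTheory GRing.Theory Num.Theory.
Local Open Scope ring_scope.

(* Only the three-term relations and the invertibility of the leading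
   coefficients G_n enter.  Expanding a vector polynomial in the monomial
   vectors X_k and using x_i X_k = L_{k,i} X_{k+1} for a 0/1 shift matrix
   L_{k,i}, the relation for x_i P_n becomes an identity between coefficient
   matrices, because scaling z -> t z separates the homogeneous degrees.  Its
   top degree gives G_n L_{n,i} = A_{n,i} G_{n+1}; the degree n part of the
   relation for x_i P_{n+1} gives
   G^{n+1}_{n-1} L_{n-1,i} = A_{n+1,i} G^{n+2}_n + A_{n,i}^T G_n.
   Using the latter for j at level n and for i at level n-1, then eliminating
   the L's with the former, yields the claim multiplied on the right by G_n. *)

Lemma vanishing_poly_coef_eq0 {R : numDomainType} {N} (a : nat -> R) :
  (forall t, \sum_(k < N) a k * t ^+ k = 0) -> forall k, (k < N)%N -> a k = 0.
Proof.
move=> a0 k ltkN.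
have p0 : \poly_(k < N) a k = 0.
  apply: (@roots_geq_poly_eq0 _ _ [seq i%:R | i <- iota 0 N]).
  - by apply/allP => _ /mapP[i _ ->]; rewrite rootE horner_poly a0.
  - by rewrite map_inj_uniq ?iota_uniq // => i j /eqP; rewrite eqr_nat => /eqP.
  - by rewrite size_map size_iota size_poly.
by have := congr1 (coefp k) p0; rewrite /= coef_poly ltkN coef0.
Qed.

Lemma scaled_sum_eq0 {R : numDomainType} {p q N} (v : nat -> 'M[R]_(p, q)) :
  (forall t, \sum_(k < N) t ^+ k *: v k = 0) -> forall k, (k < N)%N -> v k = 0.
Proof.
move=> v0 k ltkN; apply/matrixP => r c; rewrite mxE.
apply: (vanishing_poly_coef_eq0 (fun k => v k r c) _ _ ltkN) => t.
transitivity ((\sum_(i < N) t ^+ i *: v i) r c); last by rewrite v0 mxE.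
by rewrite summxE; apply: eq_bigr => i _; rewrite mxE mulrC.
Qed.

Lemma monvec_scale (R : realType) k (t : R) (z : R * R) :
  monvec k (t * z.1, t * z.2) = t ^+ k *: monvec k z.
Proof.
apply/matrixP => i j; rewrite !mxE /= !exprMn.
by rewrite mulrACA -exprD subnK // -ltnS.
Qed.

Lemma mulmx_monvec_eq0 (R : realType) p n (C : 'M[R]_(p, n.+1)) :
  (forall z, C *m monvec n z = 0) -> C = 0.
Proof.
move=> C0; apply/matrixP => r c; rewrite mxE -[c]inord_val.
apply: (vanishing_poly_coef_eq0 (fun k => C r (inord k)) _ _ (ltn_ord c)) => t.
transitivity ((C *m monvec n (1, t)) r ord0); last by rewrite C0 mxE.
by rewrite mxE; apply: eq_bigr => k _; rewrite inord_val mxE /= expr1n mul1r.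
Qed.

(* [opsP G n] is [polymap n.+1 (G n)] by conversion. *)
Definition polymap {R : realType} {p} N (M : forall k, 'M[R]_(p, k.+1)) (z : R * R)
  : 'cV[R]_p := \sum_(k < N) M k *m monvec k z.

Section PolyMaps.
Context {R : realType} {p : nat}.
Implicit Types (M : forall k, 'M[R]_(p, k.+1)) (z : R * R).

Lemma polymapD N M M' z :
  polymap N M z + polymap N M' z = polymap N (fun k => M k + M' k) z.
Proof. by rewrite -big_split; apply: eq_bigr => k _; rewrite mulmxDl. Qed.

Lemma mulmx_polymap {q} (C : 'M[R]_(q, p)) N M z :
  C *m polymap N M z = polymap N (fun k => C *m M k) z.
Proof. by rewrite mulmx_sumr; apply: eq_bigr => k _; rewrite mulmxA. Qed.

Lemma polymap_widen N N' M z : (N <= N')%N ->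
  polymap N M z = polymap N' (fun k => if (k < N)%N then M k else 0) z.
Proof.
move=> leNN'; rewrite /polymap (big_ord_widen N' (fun k => M k *m monvec k z)) //.
by rewrite big_mkcond; apply: eq_bigr => k _; case: ifP; rewrite ?mul0mx.
Qed.

Lemma polymap_inj N M M' :
  (forall z, polymap N M z = polymap N M' z) -> forall k, (k < N)%N -> M k = M' k.
Proof.
move=> eqM k ltkN; apply/eqP; rewrite -subr_eq0; apply/eqP.
apply: mulmx_monvec_eq0 => z.
apply: (scaled_sum_eq0 (fun k => (M k - M' k) *m monvec k z) _ _ ltkN) => t.
transitivity (polymap N M (t * z.1, t * z.2) - polymap N M' (t * z.1, t * z.2)).
  rewrite /polymap -sumrB; apply: eq_bigr => i _.
  by rewrite monvec_scale -!scalemxAr -scalerBr mulmxBl.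
by rewrite eqM subrr.
Qed.

End PolyMaps.

Definition shiftmx (R : realType) (i : 'I_2) k : 'M[R]_(k.+1, k.+2) :=
  \matrix_(r < k.+1, c < k.+2) (c == (r + i)%N :> nat)%:R.

Lemma coordf_monvec (R : realType) i k (z : R * R) :
  coordf i z *: monvec k z = shiftmx R i k *m monvec k.+1 z.
Proof.
have lt_ri (r : 'I_k.+1) : (r + i < k.+2)%N.
  by have := ltn_ord r; have := ltn_ord i; lia.
apply/matrixP => r c0; rewrite !mxE (bigD1 (Ordinal (lt_ri r))) //= big1 => [|c].
  rewrite !mxE /= eqxx mul1r addr0 /coordf.
  case: i lt_ri => [[|[|//]] ?] _; rewrite /= ?addn0 ?addn1.
    by rewrite subSn ?exprS ?mulrA //; exact: ltn_ord r.
  by rewrite subSS exprS mulrCA.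
by rewrite !mxE -val_eqE /= => /negbTE ->; rewrite mul0r.
Qed.

Definition shift_coef {R : realType} {p} (i : 'I_2) (M : forall k, 'M[R]_(p, k.+1)) d
  : 'M[R]_(p, d.+1) :=
  match d with 0 => 0 | k.+1 => M k *m shiftmx R i k end.

Lemma coordf_polymap {R : realType} {p} i N (M : forall k, 'M[R]_(p, k.+1)) z :
  coordf i z *: polymap N M z = polymap N.+1 (shift_coef i M) z.
Proof.
rewrite /polymap big_ord_recl /= mul0mx add0r scaler_sumr.
by apply: eq_bigr => k _; rewrite scalemxAr coordf_monvec mulmxA.
Qed.

(* [G m d] is junk for [d > m], hence the explicit truncation. *)
Definition prev_coef {R : realType} (G : forall n k, 'M[R]_(n.+1, k.+1)) n d
  : 'M[R]_(n, d.+1) :=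
  match n with 0 => 0 | m.+1 => if (d <= m)%N then G m d else 0 end.

Section ThreeTermRecurrence.
Context {R : realType} {G : forall n k : nat, 'M[R]_(n.+1, k.+1)}
  {A : 'I_2 -> forall n : nat, 'M[R]_(n.+1, n.+2)}.
Hypothesis hA : forall (i : 'I_2) (n : nat) (z : R * R),
  coordf i z *: opsP G n z
  = A i n *m opsP G n.+1 z + (Aprev (A i) n)^T *m opsPprev G n z.

Lemma opsPprev_polymap n z : opsPprev G n z = polymap n.+2 (prev_coef G n) z.
Proof.
case: n => [|m] /=; last by apply: polymap_widen; exact: leqW (leqnSn _).
by rewrite /polymap big1 // => k _; rewrite mul0mx.
Qed.

Lemma recurrence_coef i n d : (d < n.+2)%N ->
  shift_coef i (G n) d = A i n *m G n.+1 d + (Aprev (A i) n)^T *m prev_coef G n d.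
Proof.
move: d; apply: polymap_inj => z; have := hA i n z.
rewrite (coordf_polymap i n.+1 (G n)) (mulmx_polymap (A i n) n.+2 (G n.+1)).
by rewrite opsPprev_polymap mulmx_polymap polymapD.
Qed.

Lemma leading_recurrence i n : G n n *m shiftmx R i n = A i n *m G n.+1 n.+1.
Proof.
have /= -> := recurrence_coef i n n.+1 (ltnSn n.+1).
by case: n => [|m] /=; rewrite ?ltnNge ?leqnSn /= mulmx0 addr0.
Qed.

Lemma subleading_recurrence i n :
  shift_coef i (G n.+1) n = A i n.+1 *m G n.+2 n + (A i n)^T *m G n n.
Proof. by rewrite recurrence_coef /= ?leqnn // ltnS leqW. Qed.

Hypothesis hU : forall n, G n n \in unitmx.

Lemma shift_coef_shiftmx i j n :
  shift_coef i (G n.+1) n *m shiftmx R j n = lowTerm G (A i) (A j) n.+1 *m G n.+1 n.+1.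
Proof.
case: n => [|m] /=; first by rewrite !mul0mx.
rewrite -!mulmxA -leading_recurrence !mulmxA -[X in _ = X *m _]mulmxA.
by rewrite -leading_recurrence mulmxA mulmxKV.
Qed.

Lemma lowTerm_mulmxG i j n :
  A i n *m shift_coef j (G n.+1) n + (Aprev (A i) n)^T *m Aprev (A j) n *m G n n
  = lowTerm G (A i) (A j) n *m G n n.
Proof.
case: n => [|m] /=; first by rewrite mulmx0 trmx0 !mul0mx addr0.
rewrite -shift_coef_shiftmx subleading_recurrence mulmxDl.
by rewrite -!mulmxA leading_recurrence !mulmxA.
Qed.

End ThreeTermRecurrence.

Theorem proposition4p4 (R : realType) (a40 a22 a04 a20 a02 : R)
  (h40 : 0 <= a40) (h22 : 0 <= a22) (h04 : 0 <= a04)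
  (h1 : 0 < a40 + a22) (h2 : 0 < a22 + a04)
  (G : forall n k : nat, 'M[R]_(n.+1, k.+1))
  (A : 'I_2 -> forall n : nat, 'M[R]_(n.+1, n.+2))
  (hG : orthonormal_system (freud_W a40 a22 a04 a20 a02) G)
  (hA : forall (i : 'I_2) (n : nat) (z : R * R),
      coordf i z *: opsP G n z
      = A i n *m opsP G n.+1 z + (Aprev (A i) n)^T *m opsPprev G n z) :
  forall (n : nat) (i j : 'I_2),
    A i n *m (A j n)^T + (Aprev (A i) n)^T *m Aprev (A j) n
    = lowTerm G (A i) (A j) n
      - A i n *m A j n.+1 *m G n.+2 n *m invmx (G n n).
Proof.
case: hG => hU _ n i j.
have eqG : (A i n *m (A j n)^T + (Aprev (A i) n)^T *m Aprev (A j) n) *m G n n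
    = lowTerm G (A i) (A j) n *m G n n - A i n *m A j n.+1 *m G n.+2 n.
  rewrite -(lowTerm_mulmxG hA hU) (subleading_recurrence hA) mulmxDr.
  by rewrite mulmxDl !mulmxA [RHS]addrC !addrA addNr add0r.
by rewrite -[LHS](mulmxK (hU n)) eqG mulmxBl mulmxK.
Qed.
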